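(* Under the standing setup and assumptions (A1)–(A3) described in the context, there exist operators $S^b\in\mathcal A_b$ and $S^t\in\mathcal A_t$ such that $$U|\Omega,\Omega\rangle=S^bS^t|\Omega,\Omega\rangle .$$ Moreover, writing $U|\Omega,\Omega\rangle=\sum_{i\in I,j\in J}X_{ij}|i,j\rangle$, the coefficients factor as $X_{ij}=\alpha_i\beta_j$ for some complex numbers $\alpha_i$ ($i\in I$), $\beta_j$ ($j\in J$).
   Context: Standing setup. $\mathcal H$ is a finite-dimensional complex Hilbert space; $I$ and $J$ are finite index sets and $\{|i,j\rangle: i\in I,j\in J\}$ is an orthonormal family in $\mathcal H$ (physically: low-energy edge states of a gapped 2D system on a cylinder, $i$ labelling the bottom edge and $j$ the top edge, in a fixed topological sector). $V$ denotes their span. Real numbers $\varepsilon^b_i$ ($i\in I$) and $\varepsilon^t_j$ ($j\in J$) are given (physically $\varepsilon^b_i=E^b_i-\mu_bN^b_i$, $\varepsilon^t_j=E^t_j-\mu_tN^t_j$). There is a distinguished index, denoted $\Omega$, in $I$ and in $J$ with $\varepsilon^b_\Omega=\varepsilon^t_\Omega=0\le \varepsilon^b_i,\varepsilon^t_j$ for all $i,j$. For $\delta>0$ put $I_\delta=\{i\in I:\varepsilon^b_i\le\delta\}$, $J_\delta=\{j\in J:\varepsilon^t_j\le\delta\}$, $V_\delta=\mathrm{span}\{|i,j\rangle:i\in I_\delta,j\in J_\delta\}$. $\mathcal A_b$ and $\mathcal A_t$ are sets of linear operators on $\mathcal H$ (''operators supported near the bottom edge / top edge''), each closed under sums, scalar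 multiples, products and adjoints and containing the identity, such that every element of $\mathcal A_b$ commutes with every element of $\mathcal A_t$. $U$ is a unitary on $\mathcal H$ (the flux-insertion evolution, a finite-time evolution by a local Hamiltonian) such that $U^\dagger\mathcal A_bU\subseteq\mathcal A_b$, $U\mathcal A_bU^\dagger\subseteq\mathcal A_b$, $U^\dagger\mathcal A_tU\subseteq\mathcal A_t$, $U\mathcal A_tU^\dagger\subseteq\mathcal A_t$ (idealized Lieb–Robinson locality). Assumptions. (A1) For all $i,i'\in I$ there is $O^b_{i'i}\in\mathcal A_b$ with $O^b_{i'i}|k,j\rangle=\delta_{ki}|i',j\rangle$ for all $k\in I,j\in J$; for all $j,j'\in J$ there is $O^t_{j'j}\in\mathcal A_t$ with $O^t_{j'j}|i,l\rangle=\delta_{lj}|i,j'\rangle$ for all $i\in I,l\in J$. (A2) For all $i\in I$, $j\in J$, $O^b\in\mathcal A_b$, $O^t\in\mathcal A_t$: $\langle i,j|O^bO^t|i,j\rangle=\langle i,j|O^b|i,j\rangle\langle i,j|O^t|i,j\rangle$. (A3) There is $\delta>0$ with $U V_\delta\subseteq V$. *)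

(* The Hilbert space H is C^n ('cV[C]_n) with the standard
   inner product, C any numClosedFieldType (e.g. the complex numbers). *)
From HB Require Import structures.
From mathcomp Require Import all_boot all_order all_algebra.
Set Implicit Arguments. Unset Strict Implicit. Unset Printing Implicit Defensive.
Import Order.TTheory GRing.Theory Num.Theory.
Local Open Scope ring_scope.

Definition adj (C : numClosedFieldType) (m k : nat) (A : 'M[C]_(m, k)) : 'M[C]_(k, m) :=
  map_mx (fun x => x^*) A^T.

Definition dotp (C : numClosedFieldType) (n : nat) (u v : 'cV[C]_n) : C :=
  (adj u *m v) 0 0.

Definition is_star_alg (C : numClosedFieldType) (n : nat) (A : 'M[C]_n -> Prop) :=
  [/\ A 1%:M,
      (forall X Y, A X -> A Y -> A (X + Y)),
      (forall (c : C) X, A X -> A (c *: X)),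
      (forall X Y, A X -> A Y -> A (X *m Y)) &
      (forall X, A X -> A (adj X))].

Definition in_span (C : numClosedFieldType) (n : nat) (I J : finType)
  (e : I -> J -> 'cV[C]_n) (P : pred I) (Q : pred J) (v : 'cV[C]_n) : Prop :=
  exists c : I -> J -> C, v = \sum_(i | P i) \sum_(j | Q j) c i j *: e i j.

(* Let psi = U |Omega,Omega> = sum_{i,j} X i j |i,j>.
   1. |Omega,Omega> lies in the low-energy span V_delta, so by (A3) psi lies
      in V, i.e. it has such an expansion.
   2. (A2) says that |Omega,Omega> is a "product state": expectation values
      of products Ob*Ot of bottom and top operators factor.  Conjugating by
      the locality-preserving unitary U keeps this property, so psi is a
      product state as well.
   3. Testing the product property of psi against the matrix units of (A1)
      (Ob = |i0><i|, Ot = |j0><j|) gives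
         X i j * conj (X i0 j0) = a i * b j
      for suitable a, b; choosing (i0, j0) with X i0 j0 <> 0 shows that X
      has rank one: X i j = alpha i * beta j.
   4. Then Sb = sum_i alpha i |i><Omega| and St = sum_j beta j |j><Omega|
      are in Ab and At, and Sb St |Omega,Omega> = psi. *)
From HB Require Import structures.
From mathcomp Require Import all_boot all_order all_algebra.
Import Order.TTheory GRing.Theory Num.Theory.
Local Open Scope ring_scope.
Set Implicit Arguments. Unset Strict Implicit.

Section InnerProduct.
Variables (C : numClosedFieldType) (n : nat).

Lemma dotpE (u v : 'cV[C]_n) : dotp u v = \sum_k (u k 0)^* * v k 0.
Proof. by rewrite /dotp /adj !mxE; apply: eq_bigr => k _; rewrite !mxE. Qed.

Lemma dotp_sumr (T : finType) (u : 'cV[C]_n) (F : T -> 'cV[C]_n) :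
  dotp u (\sum_t F t) = \sum_t dotp u (F t).
Proof. by rewrite /dotp mulmx_sumr summxE. Qed.

Lemma dotpZr (u v : 'cV[C]_n) (c : C) : dotp u (c *: v) = c * dotp u v.
Proof. by rewrite /dotp -scalemxAr mxE. Qed.

Lemma dotpC (u v : 'cV[C]_n) : dotp u v = (dotp v u)^*.
Proof.
rewrite !dotpE rmorph_sum; apply: eq_bigr => k _.
rewrite rmorphM mulrC; congr (_ * _); exact/esym/conjCK.
Qed.

Lemma adjM (m k p : nat) (A : 'M[C]_(m, k)) (B : 'M[C]_(k, p)) :
  adj (A *m B) = adj B *m adj A.
Proof. by rewrite /adj trmx_mul (map_mxM Num.Def.conjC). Qed.

Lemma dotp_mull (A : 'M[C]_n) (u v : 'cV[C]_n) :
  dotp (A *m u) v = dotp u (adj A *m v).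
Proof. by rewrite /dotp adjM mulmxA. Qed.

End InnerProduct.

Arguments dotp : simpl never.

Lemma star_alg_lincomb (C : numClosedFieldType) (n : nat) (T : finType)
    (A : 'M[C]_n -> Prop) (c : T -> C) (F : T -> 'M[C]_n) :
  is_star_alg A -> (forall t, A (F t)) -> A (\sum_t c t *: F t).
Proof.
case=> A1 AD AZ _ _ AF; apply: (big_ind A) => [||t _]; last exact: AZ.
- by rewrite -(scale0r (1%:M : 'M[C]_n)); apply: AZ.
- exact: AD.
Qed.

Definition product_state (C : numClosedFieldType) (n : nat)
    (Ab At : 'M[C]_n -> Prop) (psi : 'cV[C]_n) : Prop :=
  forall Ob Ot, Ab Ob -> At Ot ->
    dotp psi (Ob *m Ot *m psi) = dotp psi (Ob *m psi) * dotp psi (Ot *m psi).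

(* A unitary whose conjugation preserves both algebras maps product states
   to product states, since <U v | M U v> = <v | (U^* M U) v>. *)
Lemma product_state_unitary (C : numClosedFieldType) (n : nat)
    (Ab At : 'M[C]_n -> Prop) (U : 'M[C]_n) (v : 'cV[C]_n) :
  U *m adj U = 1%:M ->
  (forall X, Ab X -> Ab (adj U *m X *m U)) ->
  (forall X, At X -> At (adj U *m X *m U)) ->
  product_state Ab At v -> product_state Ab At (U *m v).
Proof.
move=> UUadj AbU AtU prod_v Ob Ot AbOb AtOt.
have conj M : dotp (U *m v) (M *m (U *m v)) = dotp v ((adj U *m M *m U) *m v).
  by rewrite dotp_mull !mulmxA.
have split_conj : adj U *m (Ob *m Ot) *m U
                = (adj U *m Ob *m U) *m (adj U *m Ot *m U).
  by rewrite !mulmxA -(mulmxA (adj U *m Ob) U) UUadj mulmx1.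
by rewrite !conj split_conj; apply: prod_v; [apply: AbU | apply: AtU].
Qed.

Section Expansion.
Variables (C : numClosedFieldType) (n : nat) (I J : finType).
Variable e : I -> J -> 'cV[C]_n.

Definition expand (X : I -> J -> C) : 'cV[C]_n := \sum_i \sum_j X i j *: e i j.

(* O acts as the bottom matrix unit |i'><i| (tensored with the identity). *)
Definition bottom_unit (i i' : I) (O : 'M[C]_n) : Prop :=
  forall k j, O *m e k j = if k == i then e i' j else 0.

(* O acts as the top matrix unit |j'><j| (tensored with the identity). *)
Definition top_unit (j j' : J) (O : 'M[C]_n) : Prop :=
  forall i l, O *m e i l = if l == j then e i j' else 0.

Lemma basis_in_span (P : pred I) (Q : pred J) a b :
  P a -> Q b -> in_span e P Q (e a b).
Proof.
move=> Pa Qb; exists (fun i j => ((i == a) && (j == b))%:R).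
rewrite (bigD1 a) // (bigD1 b) //= [X in _ + X]big1 ?addr0 => [|i /andP [_ /negbTE ni]].
  rewrite [X in _ + X]big1 ?addr0 => [|j /andP [_ /negbTE nj]]; last by rewrite nj andbF scale0r.
  by rewrite !eqxx scale1r.
by rewrite big1 // => j _; rewrite ni scale0r.
Qed.

Lemma bottom_unit_column i i' j O (Y : I -> C) :
  bottom_unit i i' O -> O *m (\sum_k Y k *: e k j) = Y i *: e i' j.
Proof.
move=> hO; rewrite mulmx_sumr (bigD1 i) //= big1 ?addr0 => [|k /negbTE nk].
  by rewrite -scalemxAr hO eqxx.
by rewrite -scalemxAr hO nk scaler0.
Qed.

Lemma top_unit_row j j' i O (Y : J -> C) :
  top_unit j j' O -> O *m (\sum_l Y l *: e i l) = Y j *: e i j'.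
Proof.
move=> hO; rewrite mulmx_sumr (bigD1 j) //= big1 ?addr0 => [|l /negbTE nl].
  by rewrite -scalemxAr hO eqxx.
by rewrite -scalemxAr hO nl scaler0.
Qed.

Lemma bottom_unit_expand i i' O X :
  bottom_unit i i' O -> O *m expand X = \sum_l X i l *: e i' l.
Proof.
move=> hO; rewrite /expand exchange_big mulmx_sumr.
by apply: eq_bigr => l _; exact: bottom_unit_column.
Qed.

Lemma top_unit_expand j j' O X :
  top_unit j j' O -> O *m expand X = \sum_k X k j *: e k j'.
Proof.
by move=> hO; rewrite /expand mulmx_sumr; apply: eq_bigr => k _; exact: top_unit_row.
Qed.

Lemma product_of_units (Ob : I -> 'M[C]_n) (Ot : J -> 'M[C]_n) i0 j0
    (alpha : I -> C) (beta : J -> C) (X : I -> J -> C) :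
  (forall i, bottom_unit i0 i (Ob i)) -> (forall j, top_unit j0 j (Ot j)) ->
  (forall i j, X i j = alpha i * beta j) ->
  (\sum_i alpha i *: Ob i) *m (\sum_j beta j *: Ot j) *m e i0 j0 = expand X.
Proof.
move=> hOb hOt defX.
have top_part : (\sum_j beta j *: Ot j) *m e i0 j0 = \sum_j beta j *: e i0 j.
  rewrite mulmx_suml; apply: eq_bigr => j _.
  by rewrite -scalemxAl hOt eqxx.
have bottom_part j : (\sum_i alpha i *: Ob i) *m e i0 j = \sum_i alpha i *: e i j.
  rewrite mulmx_suml; apply: eq_bigr => i _.
  by rewrite -scalemxAl hOb eqxx.
rewrite -mulmxA top_part mulmx_sumr /expand exchange_big.
apply: eq_bigr => j _; rewrite -scalemxAr bottom_part scaler_sumr.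
by apply: eq_bigr => i _; rewrite scalerA defX mulrC.
Qed.

Hypothesis e_orthonormal :
  forall i j i' j', dotp (e i j) (e i' j') = ((i == i') && (j == j'))%:R.

Lemma expand_coef X a b : dotp (e a b) (expand X) = X a b.
Proof.
rewrite dotp_sumr (bigD1 a) //= [X in _ + X]big1 ?addr0 => [|i /negbTE ni].
  rewrite dotp_sumr (bigD1 b) //= [X in _ + X]big1 ?addr0 => [|j /negbTE nj].
    by rewrite dotpZr e_orthonormal !eqxx mulr1.
  by rewrite dotpZr e_orthonormal eqxx eq_sym nj mulr0.
by rewrite dotp_sumr big1 // => j _; rewrite dotpZr e_orthonormal eq_sym ni mulr0.
Qed.

Section ProductState.
Variables (Ab At : 'M[C]_n -> Prop).
Hypothesis bottom_units : forall i i', exists O, Ab O /\ bottom_unit i i' O.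
Hypothesis top_units : forall j j', exists O, At O /\ top_unit j j' O.

Lemma product_state_cross X i j i0 j0 :
  product_state Ab At (expand X) ->
  X i j * (X i0 j0)^* =
  dotp (expand X) (\sum_l X i l *: e i0 l) * dotp (expand X) (\sum_k X k j *: e k j0).
Proof.
move=> prod; have [Ob [AbOb hOb]] := bottom_units i i0.
have [Ot [AtOt hOt]] := top_units j j0.
have := prod _ _ AbOb AtOt.
rewrite -mulmxA (top_unit_expand X hOt) (bottom_unit_column j0 (fun k => X k j) hOb).
rewrite (bottom_unit_expand X hOb) dotpZr => <-.
by rewrite dotpC expand_coef.
Qed.

Lemma product_state_factor X :
  product_state Ab At (expand X) ->
  exists (alpha : I -> C) (beta : J -> C), forall i j, X i j = alpha i * beta j.
Proof.
move=> prod.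
case: (pickP (fun p : I * J => X p.1 p.2 != 0)) => [[i0 j0] /= nzX | X0]; last first.
  exists (fun _ => 0), (fun _ => 0) => i j; rewrite mulr0.
  by move/negbFE/eqP: (X0 (i, j)).
have nz_conj : (X i0 j0)^* != 0 by rewrite conjC_eq0.
exists (fun i => dotp (expand X) (\sum_l X i l *: e i0 l) / (X i0 j0)^*).
exists (fun j => dotp (expand X) (\sum_k X k j *: e k j0)) => i j.
by rewrite mulrAC -product_state_cross // mulfK.
Qed.

End ProductState.
End Expansion.

Theorem mainTheorem3 (C : numClosedFieldType) (n : nat) (I J : finType)
  (e : I -> J -> 'cV[C]_n)
  (eb : I -> C) (et : J -> C) (OmI : I) (OmJ : J)
  (Ab At : 'M[C]_n -> Prop) (U : 'M[C]_n) :
  (* orthonormal family |i,j> *)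
  (forall i j i' j', dotp (e i j) (e i' j') = ((i == i') && (j == j'))%:R) ->
  (* the epsilons are real, nonnegative, zero at Omega *)
  eb OmI = 0 -> et OmJ = 0 ->
  (forall i, 0 <= eb i) -> (forall j, 0 <= et j) ->
  (* operator algebras near bottom / top edge *)
  is_star_alg Ab -> is_star_alg At ->
  (forall X Y, Ab X -> At Y -> X *m Y = Y *m X) ->
  (* U unitary and locality-preserving *)
  adj U *m U = 1%:M -> U *m adj U = 1%:M ->
  (forall X, Ab X -> Ab (adj U *m X *m U)) ->
  (forall X, Ab X -> Ab (U *m X *m adj U)) ->
  (forall X, At X -> At (adj U *m X *m U)) ->
  (forall X, At X -> At (U *m X *m adj U)) ->
  (* (A1) *)
  (forall i i', exists O, Ab O /\
     forall k j, O *m e k j = if k == i then e i' j else 0) ->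
  (forall j j', exists O, At O /\
     forall i l, O *m e i l = if l == j then e i j' else 0) ->
  (* (A2) *)
  (forall i j Ob Ot, Ab Ob -> At Ot ->
     dotp (e i j) (Ob *m Ot *m e i j) =
     dotp (e i j) (Ob *m e i j) * dotp (e i j) (Ot *m e i j)) ->
  (* (A3) *)
  (exists delta : C, 0 < delta /\
     forall v, in_span e (fun i => eb i <= delta) (fun j => et j <= delta) v ->
               in_span e predT predT (U *m v)) ->
  (* conclusion *)
  (exists Sb St, Ab Sb /\ At St /\ U *m e OmI OmJ = Sb *m St *m e OmI OmJ) /\
  in_span e predT predT (U *m e OmI OmJ) /\
  (forall X : I -> J -> C,
     U *m e OmI OmJ = \sum_i \sum_j X i j *: e i j ->
     exists (alpha : I -> C) (beta : J -> C),
       forall i j, X i j = alpha i * beta j).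
Proof.
move=> ortho ebO etO _ _ starAb starAt _ _ UUadj AbU _ AtU _ bunits tunits A2.
case=> delta [delta_gt0 A3].
have psi_in_V : in_span e predT predT (U *m e OmI OmJ).
  by apply/A3/basis_in_span; rewrite ?ebO ?etO ltW.
have psi_prod : product_state Ab At (U *m e OmI OmJ).
  exact: product_state_unitary (A2 OmI OmJ).
have psi_factor X : U *m e OmI OmJ = expand e X ->
    exists (alpha : I -> C) (beta : J -> C), forall i j, X i j = alpha i * beta j.
  by move=> defX; apply: (product_state_factor ortho bunits tunits); rewrite -defX.
split; last by split.
have [X defX] := psi_in_V; have [alpha [beta defab]] := psi_factor X defX.
have [Ob hOb] := fin_all_exists (bunits OmI).
have [Ot hOt] := fin_all_exists (tunits OmJ).
exists (\sum_i alpha i *: Ob i), (\sum_j beta j *: Ot j); split; [|split].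
- by apply: star_alg_lincomb => // i; case: (hOb i).
- by apply: star_alg_lincomb => // j; case: (hOt j).
- rewrite defX (product_of_units (e := e) _ _ defab) // => [i|j].
  + by case: (hOb i).
  + by case: (hOt j).
Qed.
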